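(* Let $\Sigma$ be a finite alphabet, let $X,Y\subseteq\Sigma^{\mathbb{Z}}$ be shift spaces, and let $\mu$ be a shift-invariant ergodic Borel probability measure on $Y$. Then \[R_0(X,Y,\mu)\le\inf\left\{\nu\big(\{(\mathbf{x},\mathbf{y})\in X\times Y:\mathbf{x}_0\ne\mathbf{y}_0\}\big):\ \nu\in M_{\mathcal{E}}(X,Y,\mu)\right\}.\]
   Context: $T$ is the left shift on $\Sigma^{\mathbb{Z}}$; a shift space is a closed $T$-invariant subset. On $X\times Y$ the shift acts by $T(\mathbf{x},\mathbf{y})=(T\mathbf{x},T\mathbf{y})$. An extension of $\mu$ is a shift-invariant Borel probability measure $\nu$ on $X\times Y$ with $\nu(X\times A)=\mu(A)$ for all measurable $A\subseteq Y$; $M_{\mathcal{E}}(X,Y,\mu)$ is the set of extensions that are ergodic for the shift on $X\times Y$. $\mathscr{B}_n(X)$ is the set of length-$n$ words appearing as consecutive subwords of elements of $X$; $d$ is Hamming distance, $B_r$ the Hamming ball. For $A,C\subseteq\Sigma^n$, a probability measure $\eta$ on $\Sigma^n$ and $\varepsilon>0$: $R_\varepsilon(C,A,\eta)=\min\{r\in\mathbb{Z}_{\ge0}:\eta(A\cap\bigcup_{\overline{x}\in C}B_r(\overline{x}))\ge1-\varepsilon\}$. With $\mu_n$ the marginal of $\mu$ on coordinates $0,\dots,n-1$: $R_\varepsilon(X,Y,\mu)=\liminf_n\frac1nR_\varepsilon(\mathscr{B}_n(X),\mathscr{B}_n(Y),\mu_n)$, and $R_0(X,Y,\mu)=\lim_{\varepsilon\to0}R_\varepsilon(X,Y,\mu)$.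 *)

From HB Require Import structures.
From mathcomp Require Import all_boot all_order all_algebra.
From mathcomp Require Import all_classical all_reals all_analysis.
Set Implicit Arguments. Unset Strict Implicit. Unset Printing Implicit Defensive.
Import Order.TTheory GRing.Theory Num.Theory.
Local Open Scope classical_set_scope.
Local Open Scope ring_scope.

(* Finite nonempty alphabets: finite types equipped with a point
   (needed by MathComp-Analysis's measurable structures). *)
HB.structure Definition FinPointed := {T of Finite T & isPointed T}.

Definition config (S : FinPointed.type) := int -> S.

Definition left_shift (S : FinPointed.type) (x : config S) : config S := fun i => x (i + 1).

Definition shift2 (S : FinPointed.type) (p : config S * config S) : config S * config S :=
  (left_shift p.1, left_shift p.2).

(* Closedness in the product topology of discrete copies of S, unfolded:
   x lies in the closure of X iff every central window of x is realised by
   some element of X. *)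
Definition closed_config (S : FinPointed.type) (X : set (config S)) : Prop :=
  forall x : config S,
    (forall n : nat, exists2 y, X y & forall i : int, `|i| <= n%:Z -> y i = x i) ->
    X x.

(* T(X) = X  (T is a bijection, so this is  x \in X <-> T x \in X). *)
Definition shift_invariant (S : FinPointed.type) (X : set (config S)) : Prop :=
  forall x : config S, X x <-> X (left_shift x).

Definition shift_space (S : FinPointed.type) (X : set (config S)) : Prop :=
  closed_config X /\ shift_invariant X.

(* Cylinder sets; they generate the Borel sigma-algebra of the product topology. *)
Definition cylinders (S : FinPointed.type) : set (set (config S)) :=
  [set C | exists (n : nat) (z : config S),
      C = [set x | forall i : int, `|i| <= n%:Z -> x i = z i]].

Notation cylT S := (g_sigma_algebraType (@cylinders S)).

Definition invariant_measure d (T : measurableType d) (R : realType)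
    (f : T -> T) (P : probability T R) : Prop :=
  forall E : set T, measurable E -> P (f @^-1` E) = P E.

Definition ergodic_measure d (T : measurableType d) (R : realType)
    (f : T -> T) (P : probability T R) : Prop :=
  invariant_measure f P /\
  forall E : set T, measurable E -> f @^-1` E = E -> P E = 0%E \/ P E = 1%E.

(* Extensions of mu to X x Y (measures on Sigma^Z x Sigma^Z whose mass is on X x Y,
   which follows from the marginal condition with A = Y). *)
Definition extension (S : FinPointed.type) (R : realType) (X Y : set (config S))
    (mu : probability (cylT S) R) (nu : probability (cylT S * cylT S)%type R) : Prop :=
  @invariant_measure _ (cylT S * cylT S)%type R (@shift2 S) nu /\
  forall A : set (cylT S), measurable A -> A `<=` Y -> nu (X `*` A) = mu A.

Definition ergodic_extensions (S : FinPointed.type) (R : realType) (X Y : set (config S))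
    (mu : probability (cylT S) R) : set (probability (cylT S * cylT S)%type R) :=
  [set nu | extension X Y mu nu /\ @ergodic_measure _ (cylT S * cylT S)%type R (@shift2 S) nu].

Definition word (S : FinPointed.type) (n : nat) := 'I_n -> S.

Definition hamming (S : FinPointed.type) (n : nat) (u v : word S n) : nat :=
  #|[pred i : 'I_n | u i != v i]|.

Definition hball (S : FinPointed.type) (n : nat) (r : nat) (c : word S n) : set (word S n) :=
  [set w | (hamming c w <= r)%N].

Definition language (S : FinPointed.type) (X : set (config S)) (n : nat) : set (word S n) :=
  [set w | exists2 x, X x & exists k : int, forall i : 'I_n, x (k + (i : nat)%:Z) = w i].

(* R_eps(C, A, eta) = min { r in Z>=0 : eta(A cap U_{c in C} B_r(c)) >= 1 - eps },
   as an extended real (the min of a nonempty set of naturals; +oo if empty). *)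
Definition Rwords (S : FinPointed.type) (R : realType) (n : nat) (eps : R)
    (C A : set (word S n)) (eta : set (word S n) -> \bar R) : \bar R :=
  ereal_inf [set (r%:R)%:E | r in
     [set r : nat | ((1 - eps)%:E <= eta (A `&` \bigcup_(c in C) hball r c))%E]].

Definition marginal (S : FinPointed.type) (R : realType) (mu : probability (cylT S) R)
    (n : nat) : set (word S n) -> \bar R :=
  fun W => mu [set y : cylT S | W (fun i : 'I_n => y (i : nat)%:Z)].

Definition Reps (S : FinPointed.type) (R : realType) (X Y : set (config S))
    (mu : probability (cylT S) R) (eps : R) : \bar R :=
  limn_einf (fun n : nat =>
    (@Rwords S R n eps (@language S X n) (@language S Y n) (@marginal S R mu n) * ((n%:R)^-1)%:E)%E).

Definition R0 (S : FinPointed.type) (R : realType) (X Y : set (config S))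
    (mu : probability (cylT S) R) : \bar R :=
  lim (Reps X Y mu @ 0^'+).

(* Fix an ergodic extension nu of mu and let D be the event {x_0 <> y_0}.
   Garsia's proof of the maximal ergodic theorem, applied to the sequence of
   mismatch indicators of (x, y) along the shift, shows that for c > nu(D) the
   shift-invariant set on which the number of mismatches in [0, n) exceeds c n
   by arbitrarily large amounts has measure at most nu(D) / c < 1, hence is null
   by ergodicity.  So for all g, eps > 0 and n large, with nu-probability at
   least 1 - eps a pair in X x Y has at most (nu(D) + g) n mismatches among its
   first n coordinates.  As nu projects onto mu, the length-n words of Y then
   lie, with mu_n-probability at least 1 - eps, within Hamming distance
   (nu(D) + g) n of words of X, i.e. R_eps(X, Y, mu) <= nu(D) + g. *)

From HB Require Import structures.
From mathcomp Require Import all_boot all_order all_algebra.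
From mathcomp Require Import all_classical all_reals all_analysis.
From mathcomp Require Import zify lra.
Import Order.TTheory GRing.Theory Num.Theory.
Set Implicit Arguments. Unset Strict Implicit. Unset Printing Implicit Defensive.
Local Open Scope classical_set_scope.
Local Open Scope ring_scope.

Lemma measure_fin_disjoint_bigcup d (T : measurableType d) (R : realType)
    (mu : {measure set T -> \bar R}) (I : finType) (P : pred I) (F : I -> set T) :
  (forall i, measurable (F i)) -> (forall i j, i != j -> F i `&` F j = set0) ->
  mu (\bigcup_(i in [set i | P i]) F i) = (\sum_(i | P i) mu (F i))%E.
Proof.
move=> mF Fdisj; rewrite measure_fin_bigcup.
- by rewrite [RHS]bigfs ?index_enum_uniq // => i _; rewrite mem_index_enum.
- exact: finite_finset.
- by apply/trivIsetP => i j _ _; exact: Fdisj.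
- by move=> i _; exact: mF.
Qed.

Lemma measure_nondecreasing_bigcup_le d (T : measurableType d) (R : realType)
    (mu : {measure set T -> \bar R}) (F : (set T)^nat) (t : \bar R) :
  (forall n, measurable (F n)) -> nondecreasing_seq F ->
  (forall n, (mu (F n) <= t)%E) -> (mu (\bigcup_n F n) <= t)%E.
Proof.
move=> mF F_nd Ft.
have F_cvg := nondecreasing_cvg_mu (mu := mu) mF (bigcupT_measurable _ mF) F_nd.
rewrite -(cvg_lim (@ereal_hausdorff R) F_cvg).
by apply: lime_le; [exact: cvgP F_cvg | exact: nearW].
Qed.

Lemma probability_nondecreasing_cover d (T : measurableType d) (R : realType)
    (P : probability T R) (A : set T) (F : (set T)^nat) (eps : R) :
  measurable A -> P A = 1%E -> (forall n, measurable (F n)) -> nondecreasing_seq F ->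
  A `<=` \bigcup_n F n -> 0 < eps -> exists n, ((1 - eps)%:E <= P (F n))%E.
Proof.
move=> mA PA mF F_nd AF eps_gt0; apply: contrapT => noF.
have F_le n : (P (F n) <= (1 - eps)%:E)%E.
  by rewrite leNgt; apply/negP => Fn; apply: noF; exists n; exact: ltW.
have := measure_nondecreasing_bigcup_le mF F_nd F_le; rewrite leNgt => /negP; apply.
have : (P A <= P (\bigcup_n F n))%E.
  by apply: le_measure; rewrite ?inE //; exact: bigcupT_measurable.
by rewrite PA; apply: lt_le_trans; rewrite lte_fin; lra.
Qed.

Lemma probability_setI_full d (T : measurableType d) (R : realType)
    (P : probability T R) (A B : set T) :
  measurable A -> measurable B -> P B = 1%E -> P (A `&` B) = P A.
Proof.
move=> mA mB PB; rewrite (measureDI P mA mB).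
rewrite (@subset_measure0 _ _ _ P (A `\` B) (~` B)) ?add0e //.
- exact: measurableD.
- exact: measurableC.
- by have := probability_setC P mB; rewrite PB subee.
Qed.

Lemma limn_einf_le_eventually (R : realType) (u : (\bar R)^nat) (b : \bar R) m :
  (forall n, (m <= n)%N -> (u n <= b)%E) -> (limn_einf u <= b)%E.
Proof.
move=> ub; rewrite limn_einf_lim; apply: lime_le; first exact: is_cvg_einfs.
exists m => // k /= mk; apply: le_trans (ub k mk).
by apply: ereal_inf_lbound; exists k => /=.
Qed.

Lemma le_limn_einf (R : realType) (u v : (\bar R)^nat) :
  (forall n, (u n <= v n)%E) -> (limn_einf u <= limn_einf v)%E.
Proof.
move=> uv; rewrite !limn_einf_lim; apply: lee_lim; [exact: is_cvg_einfs..|].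
apply: nearW => n; apply: le_ereal_inf_tmp => _ [k /= nk <-].
by apply: le_trans (uv k); apply: ereal_inf_lbound; exists k.
Qed.

Section windows.
Variable S : FinPointed.type.
Implicit Types (n : nat) (x y z : config S).
Local Notation centered_word n := {ffun 'I_(n.*2).+1 -> S}.

Definition agree_on n x y : Prop := forall i : int, `|i| <= n%:Z -> x i = y i.

Lemma agree_onC n x y : agree_on n x y -> agree_on n y x.
Proof. by move=> xy i /xy. Qed.

Definition window n x : centered_word n :=
  [ffun k : 'I_(n.*2).+1 => x (k%:Z - n%:Z)].

(* Coordinates outside [-n, n] get junk values. *)
Definition of_window n (w : centered_word n) : config S :=
  fun i => w (inord (absz (i + n%:Z))).

Lemma agree_of_window n x : agree_on n (of_window (window n x)) x.
Proof.
move=> i; rewrite ler_norml => /andP[? ?].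
by rewrite /of_window ffunE inordK; [congr x|]; lia.
Qed.

Lemma measurable_cylinder n z :
  measurable ([set x | agree_on n x z] : set (cylT S)).
Proof. by apply: sub_sigma_algebra; exists n, z. Qed.

Lemma measurable_local_set n (P : config S -> Prop) :
  (forall x y, agree_on n x y -> P x -> P y) ->
  measurable ([set x | P x] : set (cylT S)).
Proof.
move=> Ploc.
have -> : ([set x | P x] : set (cylT S)) =
    \bigcup_(w in [set w : centered_word n | P (of_window w)])
      [set x | agree_on n x (of_window w)].
  apply/seteqP; split=> x /=.
    move=> Px; exists (window n x); last exact/agree_onC/agree_of_window.
    by apply: Ploc Px; exact/agree_onC/agree_of_window.
  by case=> w /= Pw /agree_onC xw; exact: Ploc xw Pw.
apply: fin_bigcup_measurable; first exact: finite_finset.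
by move=> w _; exact: measurable_cylinder.
Qed.

Lemma measurable_local_set2 n (P : config S -> config S -> Prop) :
  (forall x y x' y', agree_on n x x' -> agree_on n y y' -> P x y -> P x' y') ->
  measurable ([set p | P p.1 p.2] : set (cylT S * cylT S)).
Proof.
move=> Ploc.
have -> : ([set p | P p.1 p.2] : set (cylT S * cylT S)) =
    \bigcup_(w in [set w : centered_word n * centered_word n |
                   P (of_window w.1) (of_window w.2)])
      ([set x | agree_on n x (of_window w.1)] `*`
       [set y | agree_on n y (of_window w.2)]).
  apply/seteqP; split=> -[x y] /=.
    move=> Pxy; exists (window n x, window n y); last first.
      by split; exact/agree_onC/agree_of_window.
    by apply: Ploc Pxy; exact/agree_onC/agree_of_window.
  by case=> w /= Pw [/agree_onC xw /agree_onC yw]; exact: Ploc xw yw Pw.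
apply: fin_bigcup_measurable; first exact: finite_finset.
by move=> w _; apply: measurableX; exact: measurable_cylinder.
Qed.

Lemma closed_config_measurable (X : set (config S)) :
  closed_config X -> measurable (X : set (cylT S)).
Proof.
move=> Xclosed.
have -> : (X : set (cylT S)) = \bigcap_n [set x | exists2 y, X y & agree_on n y x].
  apply/seteqP; split=> [x Xx n _|x Xx]; first by exists x.
  by apply: Xclosed => n; exact: Xx.
apply: bigcapT_measurable => n; apply: (measurable_local_set (n := n)).
by move=> x y xy [z Xz zx]; exists z => // i ni; rewrite zx ?xy.
Qed.

End windows.

Definition prefix_local T k (F : (nat -> bool) -> T) : Prop :=
  forall f g, (forall j, (j < k)%N -> f j = g j) -> F f = F g.

Lemma prefix_local_widen T k k' (F : (nat -> bool) -> T) :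
  (k <= k')%N -> prefix_local k F -> prefix_local k' F.
Proof. by move=> kk' Floc f g fg; apply: Floc => j jk; rewrite fg // (leq_trans jk). Qed.

Definition prefix_count n (f : nat -> bool) : nat := \sum_(j < n) f j.

Lemma prefix_count_local n : prefix_local n (prefix_count n).
Proof. by move=> f g fg; apply: eq_bigr => j _; rewrite fg. Qed.

Section maximal_excess.
Variables (R : realDomainType) (c : R).
Implicit Types (f : nat -> bool) (N : nat).

Definition excess_sum f k : R := \sum_(j < k) ((f j)%:R - c).

Definition max_excess N f : R := \big[Num.max/0]_(k < N.+1) excess_sum f k.

Lemma excess_sumE f k : excess_sum f k = (prefix_count k f)%:R - c * k%:R.
Proof. by rewrite /excess_sum sumrB sumr_const card_ord natr_sum mulr_natr. Qed.

Lemma excess_sumS f k : excess_sum f k.+1 = ((f 0)%:R - c) + excess_sum (f \o succn) k.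
Proof. by rewrite /excess_sum big_ord_recl. Qed.

Lemma max_excess_ge0 N f : 0 <= max_excess N f.
Proof. exact: bigmax_ge_id. Qed.

Lemma le_max_excess N f k : (k <= N)%N -> excess_sum f k <= max_excess N f.
Proof. by move=> kN; exact: (le_bigmax _ _ (Ordinal (kN : (k < N.+1)%N))). Qed.

Lemma max_excess_widen N M f : (N <= M)%N -> max_excess N f <= max_excess M f.
Proof.
move=> NM; rewrite {1}/max_excess; apply: bigmax_le => [|k _]; first exact: max_excess_ge0.
by apply: le_max_excess; apply: leq_trans NM; rewrite -ltnS.
Qed.

Lemma excess_sum_local k : prefix_local k (excess_sum ^~ k).
Proof. by move=> f g fg; apply: eq_bigr => j _; rewrite fg. Qed.

Lemma max_excess_local N : prefix_local N (max_excess N).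
Proof.
move=> f g fg; apply: eq_bigr => k _; apply: excess_sum_local => j jk.
by rewrite fg // (leq_trans jk) // -ltnS.
Qed.

Lemma max_excess_step N f :
  max_excess N f <= Num.max 0 ((f 0)%:R - c + max_excess N (f \o succn)).
Proof.
rewrite {1}/max_excess; apply: bigmax_le => [|[[|k] kN] _]; first by rewrite le_max lexx.
  by rewrite /= /excess_sum big_ord0 le_max lexx.
by rewrite /= excess_sumS le_max lerD2l le_max_excess ?orbT // ltnW.
Qed.

(* Garsia's pointwise inequality; integrated against an invariant measure it
   gives the maximal ergodic inequality. *)
Lemma max_excess_shift_le N f :
  max_excess N f - max_excess N (f \o succn) <=
  (0 < max_excess N f)%R%:R * ((f 0)%:R - c).
Proof.
have [pos|le0] := ltP 0 (max_excess N f).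
  by have := max_excess_step N f; rewrite mul1r le_max leNgt pos /=; lra.
have -> : max_excess N f = 0 by apply/le_anti; rewrite le0 max_excess_ge0.
by rewrite mul0r sub0r oppr_le0 max_excess_ge0.
Qed.

End maximal_excess.

Notation pattern_type L := {ffun 'I_L -> bool}.

Definition pattern L (f : nat -> bool) : pattern_type L := [ffun i : 'I_L => f i].

Definition pattern_bits L (b : pattern_type L) (j : nat) : bool :=
  if insub j is Some i then b i else false.

Lemma pattern_bitsK L f j : (j < L)%N -> pattern_bits (pattern L f) j = f j.
Proof. by move=> jL; rewrite /pattern_bits insubT /= ffunE. Qed.

Lemma pattern_restrict L f : pattern L (pattern_bits (pattern L.+1 f)) = pattern L f.
Proof. by apply/ffunP => i; rewrite !ffunE; exact: pattern_bitsK (leqW (ltn_ord i)). Qed.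

Lemma pattern_shift L f :
  pattern L (pattern_bits (pattern L.+1 f) \o succn) = pattern L (f \o succn).
Proof.
by apply/ffunP => i; rewrite !ffunE; exact: (@pattern_bitsK L.+1 f i.+1 (ltn_ord i)).
Qed.

Lemma prefix_local_pattern T L (F : (nat -> bool) -> T) f :
  prefix_local L F -> F (pattern_bits (pattern L f)) = F f.
Proof. by move=> Floc; apply: Floc => j; exact: pattern_bitsK. Qed.

Section mismatch_process.
Variable S : FinPointed.type.
Local Notation pairs := (cylT S * cylT S)%type.

Definition mismatch (p : config S * config S) (j : nat) : bool := p.1 j%:Z != p.2 j%:Z.

Definition mismatch0 : set pairs := [set p | mismatch p 0].

Lemma mismatch_shift2 p : mismatch (shift2 p) = mismatch p \o succn.
Proof. by apply/funext => j; rewrite /mismatch /= /left_shift -addn1 PoszD. Qed.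

Lemma measurable_mismatch_set k (Q : (nat -> bool) -> bool) :
  prefix_local k Q -> measurable [set p : pairs | Q (mismatch p)].
Proof.
move=> Qloc; apply: (measurable_local_set2 (n := k) (P := fun x y => Q (mismatch (x, y)))).
move=> x y x' y' xx' yy'; rewrite (Qloc _ (mismatch (x', y'))) // => j jk.
by rewrite /mismatch /= xx' ?yy' //; lia.
Qed.

Lemma measurable_mismatch0 : measurable mismatch0.
Proof. by apply: (@measurable_mismatch_set 1 (fun f => f 0%N)) => f g ->. Qed.

End mismatch_process.
Arguments mismatch0 {S}.
Arguments measurable_mismatch0 {S}.

Section pattern_mean.
Variables (R : realType) (S : FinPointed.type).
Variable nu : probability (cylT S * cylT S)%type R.
Local Notation pairs := (cylT S * cylT S)%type.
Local Notation mass E := (fine (nu E)).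
Implicit Types (A : set pairs) (L : nat).

Definition pattern_event L (b : pattern_type L) : set pairs :=
  [set p | pattern L (mismatch p) == b].

Lemma measurable_pattern_event L (b : pattern_type L) : measurable (pattern_event b).
Proof.
apply: (@measurable_mismatch_set S L (fun f => pattern L f == b)) => f g fg.
by congr (_ == b); apply/ffunP => i; rewrite !ffunE fg.
Qed.

(* The integral over [A] of a function of the first [L] mismatch bits, as a
   finite sum over the possible mismatch patterns. *)
Definition pattern_mean A L (F : (nat -> bool) -> R) : R :=
  \sum_(b : pattern_type L) mass (A `&` pattern_event b) * F (pattern_bits b).

Lemma pattern_meanB A L F G :
  pattern_mean A L (fun f => F f - G f) = pattern_mean A L F - pattern_mean A L G.
Proof. by rewrite /pattern_mean -sumrB; apply: eq_bigr => b _; rewrite mulrBr. Qed.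

Lemma pattern_meanZ A L a F :
  pattern_mean A L (fun f => a * F f) = a * pattern_mean A L F.
Proof. by rewrite /pattern_mean mulr_sumr; apply: eq_bigr => b _; rewrite mulrCA. Qed.

Lemma ler_pattern_mean A L F G :
  (forall f, F f <= G f) -> pattern_mean A L F <= pattern_mean A L G.
Proof. by move=> FG; apply: ler_sum => b _; apply: ler_wpM2l => //; exact: fine_ge0. Qed.

Lemma sum_mass_pattern_event A L (Q : pred (pattern_type L)) : measurable A ->
  \sum_(b | Q b) mass (A `&` pattern_event b) =
  mass (A `&` [set p | Q (pattern L (mismatch p))]).
Proof.
move=> mA; rewrite sum_fine => [|b _]; last first.
  by apply: fin_num_measure; apply: measurableI => //; exact: measurable_pattern_event.
rewrite -measure_fin_disjoint_bigcup => [|b|b b' bb'].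
- congr (fine (nu _)); apply/seteqP; split=> [p [b /= Qb [Ap /eqP pb]]|p [Ap Qp]].
    by split=> //=; rewrite pb.
  by exists (pattern L (mismatch p)) => //; split => //; exact: eqxx.
- by apply: measurableI => //; exact: measurable_pattern_event.
- apply/seteqP; split=> // p [[_ /eqP pb] [_ /eqP pb']].
  by move: bb'; rewrite -pb -pb' eqxx.
Qed.

Lemma sum_mass_pattern_event_comp A L L' (G : pattern_type L -> pattern_type L')
    (F : pattern_type L' -> R) : measurable A ->
  \sum_b mass (A `&` pattern_event b) * F (G b) =
  \sum_u mass (A `&` [set p | G (pattern L (mismatch p)) == u]) * F u.
Proof.
move=> mA; rewrite (partition_big G xpredT) //; apply: eq_bigr => u _.
rewrite -(sum_mass_pattern_event (fun b => G b == u)) // mulr_suml.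
by apply: eq_bigr => b /eqP ->.
Qed.

Lemma pattern_mean_indicator A L (Q : (nat -> bool) -> bool) :
  measurable A -> prefix_local L Q ->
  pattern_mean A L (fun f => (Q f)%:R) = mass (A `&` [set p | Q (mismatch p)]).
Proof.
move=> mA Qloc.
transitivity (\sum_(b : pattern_type L | Q (pattern_bits b)) mass (A `&` pattern_event b)).
  by rewrite big_mkcond; apply: eq_bigr => b _; case: (Q _); rewrite ?mulr1 ?mulr0.
rewrite sum_mass_pattern_event //; congr (fine (nu (A `&` _))).
by apply/funext => p /=; rewrite prefix_local_pattern.
Qed.

Lemma pattern_mean_shift A L (F : (nat -> bool) -> R) :
  @invariant_measure _ pairs R (@shift2 S) nu -> measurable A -> @shift2 S @^-1` A = A ->
  prefix_local L F ->
  pattern_mean A L.+1 (fun f => F (f \o succn)) = pattern_mean A L.+1 F.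
Proof.
move=> nu_inv mA A_inv Floc.
transitivity (\sum_(b : pattern_type L.+1) mass (A `&` pattern_event b) *
    (F \o @pattern_bits L) (pattern L (pattern_bits b \o succn))).
  by apply: eq_bigr => b _; rewrite /= prefix_local_pattern.
transitivity (\sum_(b : pattern_type L.+1) mass (A `&` pattern_event b) *
    (F \o @pattern_bits L) (pattern L (pattern_bits b))); last first.
  by apply: eq_bigr => b _; rewrite /= prefix_local_pattern.
rewrite !sum_mass_pattern_event_comp //; apply: eq_bigr => u _; congr (fine _ * _).
have -> : [set p | pattern L (pattern_bits (pattern L.+1 (mismatch p))) == u] =
    pattern_event u by apply/funext => p /=; rewrite pattern_restrict.
have -> : [set p | pattern L (pattern_bits (pattern L.+1 (mismatch p)) \o succn) == u] =
    @shift2 S @^-1` pattern_event u.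
  by apply/funext => p; rewrite /pattern_event /= pattern_shift mismatch_shift2.
rewrite -[in X in nu (X `&` _)]A_inv -preimage_setI nu_inv //.
by apply: measurableI => //; exact: measurable_pattern_event.
Qed.

End pattern_mean.

Section maximal_ergodic.
Variables (R : realType) (S : FinPointed.type).
Variable nu : probability (cylT S * cylT S)%type R.
Local Notation pairs := (cylT S * cylT S)%type.
Local Notation mass E := (fine (nu E)).
Hypothesis nu_inv : @invariant_measure _ pairs R (@shift2 S) nu.
Implicit Types (A : set pairs) (c : R) (N : nat).

Definition excess_event c N : set pairs := [set p | 0 < max_excess c N (mismatch p)].

Lemma maximal_ergodic_inequality A c N :
  measurable A -> @shift2 S @^-1` A = A ->
  c * mass (A `&` excess_event c N) <= mass (A `&` excess_event c N `&` mismatch0).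
Proof.
move=> mA A_inv; set M := max_excess c N.
have M_local : prefix_local N.+1 M.
  by apply: (prefix_local_widen (leqnSn N)); exact: max_excess_local.
have : pattern_mean nu A N.+1 (fun f => M f - M (f \o succn)) <=
       pattern_mean nu A N.+1 (fun f => (0 < M f)%R%:R * ((f 0)%:R - c)).
  by apply: ler_pattern_mean => f; exact: max_excess_shift_le.
rewrite pattern_meanB (pattern_mean_shift nu_inv mA A_inv (@max_excess_local _ c N)) subrr.
have -> : (fun f : nat -> bool => (0 < M f)%R%:R * ((f 0)%:R - c)) =
    (fun f => ((0 < M f) && f 0)%R%:R - c * (0 < M f)%R%:R).
  by apply/funext => f; case: (0 < M f)%R; case: (f 0); rewrite /= ?mul1r ?mul0r; lra.
rewrite pattern_meanB pattern_meanZ !pattern_mean_indicator // ?subr_ge0.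
- congr (_ <= fine (nu _)); rewrite -setIA; congr (A `&` _).
  by apply/seteqP; split=> p /= => [/andP[]|[-> ->]].
- by move=> f g fg; rewrite (M_local f g fg) fg.
- by move=> f g fg; rewrite (M_local f g fg).
Qed.

End maximal_ergodic.

Section ergodic_frequency.
Variables (R : realType) (S : FinPointed.type).
Variable nu : probability (cylT S * cylT S)%type R.
Local Notation pairs := (cylT S * cylT S)%type.
Local Notation mass E := (fine (nu E)).
Hypothesis nu_erg : @ergodic_measure _ pairs R (@shift2 S) nu.
Implicit Types (c g eps : R).

Definition unbounded_excess c : set pairs :=
  \bigcap_K \bigcup_n [set p | K%:R < excess_sum c (mismatch p) n].

Lemma measurable_unbounded_excess c : measurable (unbounded_excess c).
Proof.
apply: bigcapT_measurable => K; apply: bigcupT_measurable => n.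
apply: (@measurable_mismatch_set S n (fun f => K%:R < excess_sum c f n)) => f g fg.
by rewrite (excess_sum_local c fg).
Qed.

(* The excess sums along [p] and along [shift2 p] differ by at most [1 + c]. *)
Lemma unbounded_excess_invariant c :
  0 <= c -> @shift2 S @^-1` unbounded_excess c = unbounded_excess c.
Proof.
move=> c_ge0; apply/seteqP; split=> p /= p_unb K _.
- have [m _] := p_unb (K + (Num.truncn c).+1)%N I.
  rewrite /= mismatch_shift2 => Km; exists m.+1 => //=.
  have := truncnS_gt c; have : 0 <= ((mismatch p 0)%:R : R) by [].
  rewrite excess_sumS; rewrite natrD in Km; lra.
- have [[|m] _] := p_unb K.+1 I; rewrite /=.
    by rewrite [X in _ < X]/excess_sum big_ord0 ltNge ler0n.
  rewrite excess_sumS -mismatch_shift2 => Km; exists m => //=.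
  have : (mismatch p 0)%:R <= 1 :> R by case: (mismatch p 0).
  rewrite -natr1 in Km; lra.
Qed.

Lemma unbounded_excess_null c : mass mismatch0 < c -> nu (unbounded_excess c) = 0%E.
Proof.
move=> c_gt; have c_gt0 : 0 < c by apply: le_lt_trans c_gt; exact: fine_ge0.
have U_inv := unbounded_excess_invariant (ltW c_gt0).
have mU := measurable_unbounded_excess c.
pose E N := unbounded_excess c `&` excess_event c N.
have mE N : measurable (E N).
  apply: measurableI => //.
  apply: (@measurable_mismatch_set S N (fun f => 0 < max_excess c N f)) => f g fg.
  by rewrite (max_excess_local c fg).
have E_le N : (nu (E N) <= (mass mismatch0 / c)%:E)%E.
  rewrite -(fineK (fin_num_measure _ _ (mE N))) lee_fin ler_pdivlMr // mulrC.
  apply: le_trans (maximal_ergodic_inequality nu_erg.1 c N mU U_inv) _.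
  have mEm0 : measurable (E N `&` mismatch0).
    by apply: measurableI; [exact: mE | exact: measurable_mismatch0].
  rewrite -lee_fin !fineK ?fin_num_measure //; last exact: measurable_mismatch0.
  by apply: le_measure; rewrite ?inE //; exact: measurable_mismatch0.
have U_cover : \bigcup_N E N = unbounded_excess c.
  apply/seteqP; split=> [p [N _ []] //|p Up].
  have [n _ n_pos] := Up 0%N I; exists n => //; split => //=.
  exact: lt_le_trans n_pos (le_max_excess _ _ (leqnn n)).
have : (nu (unbounded_excess c) <= (mass mismatch0 / c)%:E)%E.
  rewrite -U_cover; apply: measure_nondecreasing_bigcup_le => // N N' NN'.
  apply/subsetPset => p [Up pN]; split => //=.
  exact: lt_le_trans pN (max_excess_widen _ _ NN').
have [//|U1] := nu_erg.2 _ mU U_inv.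
by rewrite U1 lee_fin ler_pdivlMr // mul1r leNgt c_gt.
Qed.

Lemma mismatch_frequency_bound g eps : 0 < g -> 0 < eps ->
  exists m, forall n, (m <= n)%N -> ((1 - eps)%:E <=
    nu [set p | ((prefix_count n (mismatch p))%:R <= (mass mismatch0 + g) * n%:R)%R])%E.
Proof.
move=> g_gt0 eps_gt0; set c := mass mismatch0 + g / 2.
have mU := measurable_unbounded_excess c.
have U0 : nu (unbounded_excess c) = 0%E.
  by apply: unbounded_excess_null; rewrite ltrDl divr_gt0.
pose G (K : nat) := \bigcap_n [set p : pairs | excess_sum c (mismatch p) n <= K%:R].
have mG K : measurable (G K).
  apply: bigcapT_measurable => n.
  apply: (@measurable_mismatch_set S n (fun f => excess_sum c f n <= K%:R)) => f f' ff'.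
  by rewrite (excess_sum_local c ff').
have [K GK] : exists K, ((1 - eps)%:E <= nu (G K))%E.
  apply: (probability_nondecreasing_cover (measurableC mU)) => //.
  - by rewrite probability_setC // U0 sube0.
  - move=> K K' KK'; apply/subsetPset => p GKp n _.
    by apply: le_trans (GKp n I) _; rewrite ler_nat.
  - move=> p notU; apply: contrapT => notG; apply: notU => K _.
    apply: contrapT => noN; apply: notG; exists K => // n _ /=.
    by rewrite leNgt; apply/negP => Kn; apply: noN; exists n.
exists (Num.truncn (K%:R / (g / 2))).+1 => n Kn.
apply: le_trans GK _; apply: le_measure; rewrite ?inE //.
  apply: (@measurable_mismatch_set S n
    (fun f => (prefix_count n f)%:R <= (mass mismatch0 + g) * n%:R)) => f f' ff'.
  by rewrite (prefix_count_local ff').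
move=> p /(_ n I); rewrite /= excess_sumE => Gp.
have : K%:R <= g / 2 * n%:R.
  rewrite mulrC -ler_pdivrMr ?divr_gt0 //; apply/ltW.
  by apply: lt_le_trans (truncnS_gt _) _; rewrite ler_nat.
rewrite /c in Gp; lra.
Qed.

End ergodic_frequency.

Lemma hamming_mismatch (S : FinPointed.type) n (x y : config S) :
  hamming (fun i : 'I_n => x (i : nat)%:Z) (fun i : 'I_n => y (i : nat)%:Z) =
  prefix_count n (mismatch (x, y)).
Proof. by rewrite /hamming -sum1_card big_mkcond. Qed.

Section cover_from_extension.
Variables (R : realType) (S : FinPointed.type) (X Y : set (config S)).
Variable mu : probability (cylT S) R.
Variable nu : probability (cylT S * cylT S)%type R.
Hypotheses (X_closed : closed_config X) (Y_closed : closed_config Y).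
Hypotheses (mu_Y : mu Y = 1%E) (nu_ext : extension X Y mu nu).

Lemma marginal_cover_ge eps n r :
  ((1 - eps)%:E <= nu [set p | (prefix_count n (mismatch p) <= r)%N])%E ->
  ((1 - eps)%:E <= @marginal S R mu n
     (@language S Y n `&` \bigcup_(c in @language S X n) hball r c))%E.
Proof.
move=> nu_ge; set W := _ `&` _.
set Wy := [set y : cylT S | W (fun i : 'I_n => y (i : nat)%:Z)].
have mWy : measurable Wy.
  apply: (@measurable_local_set S n) => x y xy; congr W; apply/funext => i.
  by rewrite xy //; have := ltn_ord i; lia.
have mX := closed_config_measurable X_closed.
have mY := closed_config_measurable Y_closed.
have mC : measurable [set p : cylT S * cylT S | (prefix_count n (mismatch p) <= r)%N].
  apply: (@measurable_mismatch_set S n (fun f => prefix_count n f <= r)%N) => f g fg.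
  by rewrite (prefix_count_local fg).
have XY1 : nu (X `*` Y) = 1%E by rewrite nu_ext.2.
apply: (le_trans nu_ge); rewrite -(probability_setI_full mC (measurableX mX mY) XY1).
apply: (@le_trans _ _ (nu (X `*` (Wy `&` Y)))).
  apply: le_measure; rewrite ?inE.
  - by apply: measurableI => //; exact: measurableX.
  - by apply: measurableX => //; exact: measurableI.
  move=> [x y] /= [xy_close [Xx Yy]]; split => //; split => //; split.
    by exists y => //; exists 0 => i; rewrite add0r.
  exists (fun i : 'I_n => x (i : nat)%:Z).
    by exists x => //; exists 0 => i; rewrite add0r.
  by rewrite /hball /= hamming_mismatch.
rewrite nu_ext.2 //; last exact: measurableI.
by apply: le_measure; rewrite ?inE //; exact: measurableI.
Qed.

Hypothesis nu_erg : @ergodic_measure _ (cylT S * cylT S)%type R (@shift2 S) nu.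

Lemma Reps_le_mismatch eps : 0 < eps -> (Reps X Y mu eps <= nu mismatch0)%E.
Proof.
move=> eps_gt0; rewrite -(fineK (fin_num_measure _ _ measurable_mismatch0)).
set m0 := fine _; apply/lee_addgt0Pr => g g_gt0.
have [m freq] := mismatch_frequency_bound nu_erg g_gt0 eps_gt0.
rewrite -EFinD; apply: (@limn_einf_le_eventually _ _ _ (maxn m 1)) => n.
rewrite geq_max => /andP[mn n_gt0].
have bound_ge0 : 0 <= (m0 + g) * n%:R.
  by apply: mulr_ge0 => //; apply: addr_ge0; [exact: fine_ge0|exact: ltW].
set r := Num.truncn ((m0 + g) * n%:R).
have Rwords_le : (@Rwords S R n eps (@language S X n) (@language S Y n)
    (@marginal S R mu n) <= (r%:R)%:E)%E.
  apply: ereal_inf_lbound; exists r => //=; apply: marginal_cover_ge.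
  apply: le_trans (freq n mn) _; apply: le_measure; rewrite ?inE.
  - apply: (@measurable_mismatch_set S n
      (fun f => (prefix_count n f)%:R <= (m0 + g) * n%:R)) => f f' ff'.
    by rewrite (prefix_count_local ff').
  - apply: (@measurable_mismatch_set S n (fun f => prefix_count n f <= r)%N) => f f' ff'.
    by rewrite (prefix_count_local ff').
  by move=> p /= count_le; rewrite truncn_ge_nat.
apply: le_trans (lee_wpmul2r _ Rwords_le) _; first by rewrite lee_fin invr_ge0.
by rewrite -EFinM lee_fin ler_pdivrMr ?ltr0n // truncn_le.
Qed.

Lemma R0_le_mismatch : (R0 X Y mu <= nu mismatch0)%E.
Proof.
apply: lime_le.
  apply: nonincreasing_at_right_is_cvge; apply: nearW => x eps eps' _ _ eps_le.
  apply: le_limn_einf => n; apply: lee_wpmul2r; first by rewrite lee_fin invr_ge0.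
  apply: ereal_inf_le_tmp => _ [r r_ok <-]; exists r => //.
  by apply: le_trans r_ok; rewrite lee_fin; lra.
by near=> eps; apply: Reps_le_mismatch; near: eps; exact: nbhs_right_gt.
Unshelve. all: by end_near.
Qed.

End cover_from_extension.

Theorem proposition21 (R : realType) (S : FinPointed.type) (X Y : set (config S))
    (mu : probability (cylT S) R) :
  shift_space X -> shift_space Y ->
  mu Y = 1%E -> @ergodic_measure _ (cylT S) R (@left_shift S) mu ->
  (R0 X Y mu <=
   ereal_inf [set nu [set p : cylT S * cylT S | (p.1 (0 : int)) != (p.2 (0 : int))]
             | nu in ergodic_extensions X Y mu])%E.
Proof.
move=> [X_closed _] [Y_closed _] mu_Y _.
apply: le_ereal_inf_tmp => _ [nu [nu_ext nu_erg] <-].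
exact: R0_le_mismatch.
Qed.
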